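(* Suppose there exist constants $\epsilon,\kappa>0$ such that for all $\bm Z$ with $\mathrm{dist}(\bm Z,\mathcal W_G)\le\epsilon$ we have $\mathrm{dist}(\bm Z,\mathcal W_G)\le\kappa\|\nabla G(\bm Z)\|_F$. Then for all $\bm W$ with $\mathrm{dist}(\bm W,\mathcal W_F)\le\epsilon/\sqrt{\lambda_{\max}}$, $$\mathrm{dist}(\bm W,\mathcal W_F)\le\frac{\kappa\lambda}{\lambda_{\min}}\|\nabla F(\bm W)\|_F.$$
   Context: Let $L\ge2$, $d_0,\dots,d_L$ positive integers, $\bm Y\in\mathbb R^{d_L\times d_0}$, $\lambda_1,\dots,\lambda_L>0$, $\lambda=\prod_l\lambda_l$, $\lambda_{\min}=\min_l\lambda_l$, $\lambda_{\max}=\max_l\lambda_l$. For $\bm W=(\bm W_1,\dots,\bm W_L)$ with $\bm W_l\in\mathbb R^{d_l\times d_{l-1}}$: $F(\bm W)=\|\bm W_L\cdots\bm W_1-\bm Y\|_F^2+\sum_l\lambda_l\|\bm W_l\|_F^2$ and $G(\bm W)=\|\bm W_L\cdots\bm W_1-\sqrt\lambda\bm Y\|_F^2+\lambda\sum_l\|\bm W_l\|_F^2$; $\mathcal W_F$, $\mathcal W_G$ are the sets of critical points (zero gradient) of $F$, $G$. Distances and gradient norms use the Frobenius norm on tuples: $\mathrm{dist}(\bm W,\mathcal S)=\inf_{\bm V\in\mathcal S}(\sum_l\|\bm W_l-\bm V_l\|_F^2)^{1/2}$. *)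

From HB Require Import structures.
From mathcomp Require Import all_boot all_order all_algebra.
From mathcomp Require Import all_classical all_reals.
Set Implicit Arguments. Unset Strict Implicit. Unset Printing Implicit Defensive.
Import Order.TTheory GRing.Theory Num.Theory.
Local Open Scope ring_scope.
Local Open Scope classical_set_scope.

Section DeepLinear.
Variables (R : realType) (L : nat) (d : nat -> nat).

(* A tuple W = (W_1,...,W_L): the paper's W_{l+1} is [W l] : 'M_(d (l+1), d l),
   for l < L.  Components with index l >= L are irrelevant junk: they are
   ignored by every quantity below (norms, inner products, F, G). *)
Definition tup := forall l : nat, 'M[R]_(d l.+1, d l).

Definition tadd (W H : tup) : tup := fun l => W l + H l.
Definition tsub (W H : tup) : tup := fun l => W l - H l.
Definition tzero : tup := fun l => 0.

Definition frob2 m n (A : 'M[R]_(m, n)) : R := \sum_i \sum_j (A i j) ^+ 2.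

Definition tinner (W H : tup) : R :=
  \sum_(l < L) \sum_i \sum_j (W l i j * H l i j).
Definition tnorm (W : tup) : R := Num.sqrt (\sum_(l < L) frob2 (W l)).

Fixpoint prodW (W : tup) (k : nat) : 'M[R]_(d k, d 0) :=
  match k with
  | 0 => 1%:M
  | k'.+1 => W k' *m prodW W k'
  end.

Definition is_grad (f : tup -> R) (W g : tup) : Prop :=
  forall e : R, 0 < e -> exists2 delta : R, 0 < delta &
    forall H : tup, tnorm H < delta ->
      `|f (tadd W H) - f W - tinner g H| <= e * tnorm H.

Definition crit (f : tup -> R) : set tup := [set W | is_grad f W tzero].

Definition tdist (W : tup) (S : set tup) : R :=
  inf [set tnorm (tsub W V) | V in S].

Variables (Y : 'M[R]_(d L, d 0)) (lam : nat -> R).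
(* lam l is the paper's lambda_{l+1} *)
Definition lamP : R := \prod_(l < L) lam l.
Definition lam_min : R := \big[Order.min/lam 0%N]_(l < L) lam l.
Definition lam_max : R := \big[Order.max/lam 0%N]_(l < L) lam l.

Definition Fobj (W : tup) : R :=
  frob2 (prodW W L - Y) + \sum_(l < L) lam l * frob2 (W l).
Definition Gobj (W : tup) : R :=
  frob2 (prodW W L - Num.sqrt lamP *: Y) + lamP * \sum_(l < L) frob2 (W l).

End DeepLinear.

From HB Require Import structures.
From mathcomp Require Import all_boot all_order all_algebra.
From mathcomp Require Import all_classical all_reals.
From mathcomp Require Import ring.
Import Order.TTheory GRing.Theory Num.Theory.
Set Implicit Arguments. Unset Strict Implicit.
Local Open Scope ring_scope.
Local Open Scope classical_set_scope.

(* Rescaling the layers by a_l = sqrt(lambda_l) turns F into G up to the factor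
   lambda: G(a W) = lambda F(W), since the product of the layers is scaled by
   prod_l a_l = sqrt(lambda).  So W |-> a W maps the critical points of F onto
   those of G, stretches distances by at most sqrt(lambda_max), shrinks them by
   at most 1/sqrt(lambda_min), and maps grad F(W) to
   grad G(a W) = lambda a^-1 grad F(W), whose norm is at most
   lambda / sqrt(lambda_min) |grad F(W)|.  Transporting the error bound for G
   back to F multiplies these two factors. *)

Lemma sqrtr_prod (R : rcfType) (I : Type) (r : seq I) (P : pred I) (F : I -> R) :
  (forall i, P i -> 0 <= F i) ->
  Num.sqrt (\prod_(i <- r | P i) F i) = \prod_(i <- r | P i) Num.sqrt (F i).
Proof.
move=> F_ge0; elim/big_rec2: _ => [|i x y Pi <-]; first by rewrite sqrtr1.
by rewrite sqrtrM ?F_ge0.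
Qed.

Section TupleScaling.
Variables (R : realType) (L : nat) (d : nat -> nat).
Implicit Types (W V H g : tup R d) (b : nat -> R).

Definition tscale b W : tup R d := fun l => b l *: W l.

Lemma tup_ext W V : (forall l, W l = V l) -> W = V.
Proof. exact: boolp.functional_extensionality_dep. Qed.

Lemma tscale0 b : tscale b (tzero R d) = tzero R d.
Proof. by apply: tup_ext => l; rewrite /tscale scaler0. Qed.

Lemma tscaleBr b W V : tscale b (tsub W V) = tsub (tscale b W) (tscale b V).
Proof. by apply: tup_ext => l; rewrite /tscale /tsub scalerBr. Qed.

Lemma tscaleK b : (forall l, b l != 0) ->
  cancel (tscale b) (tscale (fun l => (b l)^-1)).
Proof. by move=> b_neq0 W; apply: tup_ext => l; rewrite /tscale scalerA mulVf ?scale1r. Qed.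

Lemma tscaleVK b : (forall l, b l != 0) ->
  cancel (tscale (fun l => (b l)^-1)) (tscale b).
Proof. by move=> b_neq0 W; apply: tup_ext => l; rewrite /tscale scalerA mulfV ?scale1r. Qed.

Lemma frob2Z m n c (A : 'M[R]_(m, n)) : frob2 (c *: A) = c ^+ 2 * frob2 A.
Proof.
rewrite /frob2 mulr_sumr; apply: eq_bigr => i _; rewrite mulr_sumr.
by apply: eq_bigr => j _; rewrite mxE exprMn.
Qed.

Lemma frob2_ge0 m n (A : 'M[R]_(m, n)) : 0 <= frob2 A.
Proof. by apply: sumr_ge0 => i _; apply: sumr_ge0 => j _; apply: sqr_ge0. Qed.

Lemma tnorm_ge0 W : 0 <= tnorm L W.
Proof. exact: sqrtr_ge0. Qed.

Lemma tnorm_tscale_le b M W : 0 <= M ->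
  (forall l, (l < L)%N -> b l ^+ 2 <= M ^+ 2) ->
  tnorm L (tscale b W) <= M * tnorm L W.
Proof.
move=> M_ge0 b_le.
rewrite /tnorm -[M in M * _](ger0_norm M_ge0) -sqrtr_sqr -sqrtrM ?sqr_ge0 //.
rewrite ler_sqrt; last by rewrite mulr_ge0 ?sqr_ge0 ?sumr_ge0 // => l _; apply: frob2_ge0.
rewrite mulr_sumr; apply: ler_sum => l _; rewrite /tscale frob2Z.
by rewrite ler_wpM2r ?frob2_ge0 ?b_le.
Qed.

Lemma is_grad_tscale (f h : tup R d -> R) b (c Mi : R) x g :
  (forall l, b l != 0) -> 0 < c -> 0 < Mi ->
  (forall l, (l < L)%N -> (b l)^-1 ^+ 2 <= Mi ^+ 2) ->
  (forall y, f (tscale b y) = c * h y) ->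
  is_grad L h x g -> is_grad L f (tscale b x) (tscale (fun l => c / b l) g).
Proof.
move=> b_neq0 c_gt0 Mi_gt0 bV_le fE hg e e_gt0.
have [del del_gt0 hdel] := hg (e / (c * Mi)) (divr_gt0 e_gt0 (mulr_gt0 c_gt0 Mi_gt0)).
exists (del / Mi) => [|H]; first exact: divr_gt0.
rewrite ltr_pdivlMr // => H_small.
set K := tscale (fun l => (b l)^-1) H.
have K_le : tnorm L K <= Mi * tnorm L H by apply: tnorm_tscale_le; first exact: ltW.
have xK : tadd (tscale b x) H = tscale b (tadd x K).
  by apply: tup_ext => l; rewrite /tscale /tadd /K scalerDr scalerA mulfV ?scale1r.
have gK : tinner L (tscale (fun l => c / b l) g) H = c * tinner L g K.
  rewrite /tinner mulr_sumr; apply: eq_bigr => l _.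
  rewrite mulr_sumr; apply: eq_bigr => i _; rewrite mulr_sumr; apply: eq_bigr => j _.
  by rewrite /tscale !mxE; ring.
rewrite xK !fE gK -!mulrBr normrM gtr0_norm //.
have K_small : tnorm L K < del by rewrite (le_lt_trans K_le) // mulrC.
apply: le_trans (ler_wpM2l (ltW c_gt0) (hdel K K_small)) _.
have -> : c * (e / (c * Mi) * tnorm L K) = e / Mi * tnorm L K.
  by field; rewrite !gt_eqF.
apply: le_trans (ler_wpM2l _ K_le) _; first by rewrite divr_ge0 ?ltW.
by rewrite mulrA divfK ?gt_eqF.
Qed.

(* The second hypothesis only serves the degenerate case of empty sets, where
   both distances are [inf set0 = 0]. *)
Lemma tdist_tscale_le (S T : set (tup R d)) b M W :
  0 < M -> (forall l, (l < L)%N -> b l ^+ 2 <= M ^+ 2) ->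
  (forall V, S V -> T (tscale b V)) -> (forall U, T U -> exists V, S V) ->
  tdist L (tscale b W) T <= M * tdist L W S.
Proof.
move=> M_gt0 b_le ST TS.
have [[V0 SV0]|S0] := boolp.pselect (exists V, S V); last first.
  rewrite /tdist.
  have -> : [set tnorm L (tsub W V) | V in S] = set0.
    by apply/seteqP; split => z // [V SV _]; apply: S0; exists V.
  have -> : [set tnorm L (tsub (tscale b W) U) | U in T] = set0.
    by apply/seteqP; split => z // [U /TS TU _]; apply: S0.
  by rewrite inf0 mulr0.
rewrite -ler_pdivrMl //; apply: lb_le_inf; first by exists (tnorm L (tsub W V0)), V0.
move=> _ [V SV <-]; rewrite ler_pdivrMl //.
apply: le_trans (tnorm_tscale_le _ (ltW M_gt0) b_le); rewrite tscaleBr.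
apply: ge_inf; last by exists (tscale b V); first exact: ST.
by exists 0 => _ [U _ <-]; apply: tnorm_ge0.
Qed.

Lemma prodW_tscale b W k :
  prodW (tscale b W) k = (\prod_(l < k) b l) *: prodW W k.
Proof.
elim: k => [|k IH] /=; first by rewrite big_ord0 scale1r.
by rewrite IH big_ord_recr /= -scalemxAl -scalemxAr scalerA mulrC.
Qed.

End TupleScaling.

Section LayerRescaling.
Variables (R : realType) (L : nat) (d : nat -> nat).
Variables (Y : 'M[R]_(d L, d 0%N)) (lam : nat -> R).
Hypothesis L_gt0 : (0 < L)%N.
Hypothesis lam_gt0 : forall l, (l < L)%N -> 0 < lam l.

Local Notation F := (Fobj Y lam).
Local Notation G := (Gobj Y lam).
Local Notation critF := (crit L F).
Local Notation critG := (crit L G).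
Local Notation lmin := (lam_min L lam).
Local Notation lmax := (lam_max L lam).
Local Notation lP := (lamP L lam).

(* Off the layers [l >= L] the factor is 1, so that [tscale sqrt_lam] is
   invertible on all of [tup]. *)
Definition sqrt_lam (l : nat) : R := if (l < L)%N then Num.sqrt (lam l) else 1.

Lemma sqrt_lam_neq0 l : sqrt_lam l != 0.
Proof. by rewrite /sqrt_lam; case: ifP => // lL; rewrite gt_eqF ?sqrtr_gt0 ?lam_gt0. Qed.

Lemma sqr_sqrt_lam l : (l < L)%N -> sqrt_lam l ^+ 2 = lam l.
Proof. by move=> lL; rewrite /sqrt_lam lL sqr_sqrtr ?ltW ?lam_gt0. Qed.

Lemma lam_min_le l : (l < L)%N -> lmin <= lam l.
Proof. by move=> lL; exact: (bigmin_le _ (Ordinal lL) (fun l : 'I_L => lam l)). Qed.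

Lemma le_lam_max l : (l < L)%N -> lam l <= lmax.
Proof. by move=> lL; exact: (le_bigmax _ (fun l : 'I_L => lam l) (Ordinal lL)). Qed.

Lemma lam_min_gt0 : 0 < lmin.
Proof. by apply: lt_bigmin => [|i _]; apply: lam_gt0. Qed.

Lemma lam_max_gt0 : 0 < lmax.
Proof. by rewrite (lt_le_trans (lam_gt0 L_gt0)) ?le_lam_max. Qed.

Lemma lamP_gt0 : 0 < lP.
Proof. by apply: prodr_gt0 => i _; apply: lam_gt0. Qed.

Lemma sqrt_lam_le l : (l < L)%N -> sqrt_lam l ^+ 2 <= Num.sqrt lmax ^+ 2.
Proof. by move=> lL; rewrite sqr_sqrt_lam // sqr_sqrtr ?le_lam_max // ltW ?lam_max_gt0. Qed.

Lemma sqrt_lamV_le l : (l < L)%N ->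
  (sqrt_lam l)^-1 ^+ 2 <= (Num.sqrt lmin)^-1 ^+ 2.
Proof.
move=> lL; rewrite !exprVn sqr_sqrt_lam // sqr_sqrtr; last exact/ltW/lam_min_gt0.
by rewrite lef_pV2 ?posrE ?lam_min_le ?lam_gt0 ?lam_min_gt0.
Qed.

Lemma Gobj_tscale W : G (tscale sqrt_lam W) = lP * F W.
Proof.
have prod_sqrt_lam : \prod_(l < L) sqrt_lam l = Num.sqrt lP.
  rewrite sqrtr_prod => [|l _]; last exact/ltW/lam_gt0.
  by apply: eq_bigr => l _; rewrite /sqrt_lam ltn_ord.
rewrite /Gobj /Fobj prodW_tscale prod_sqrt_lam -scalerBr frob2Z.
rewrite sqr_sqrtr ?ltW ?lamP_gt0 // mulrDr; congr (_ + lP * _).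
by apply: eq_bigr => l _; rewrite /tscale frob2Z sqr_sqrt_lam.
Qed.

Lemma Fobj_tscaleV W : F (tscale (fun l => (sqrt_lam l)^-1) W) = lP^-1 * G W.
Proof. by rewrite -{2}(tscaleVK sqrt_lam_neq0 W) Gobj_tscale mulKf ?gt_eqF ?lamP_gt0. Qed.

Lemma is_grad_Gobj_tscale W g : is_grad L F W g ->
  is_grad L G (tscale sqrt_lam W) (tscale (fun l => lP / sqrt_lam l) g).
Proof.
apply: is_grad_tscale sqrt_lam_neq0 lamP_gt0 _ sqrt_lamV_le Gobj_tscale.
by rewrite invr_gt0 sqrtr_gt0 lam_min_gt0.
Qed.

Lemma crit_Gobj_tscale V : critF V -> critG (tscale sqrt_lam V).
Proof. by move=> /is_grad_Gobj_tscale; rewrite tscale0. Qed.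

Lemma crit_Fobj_tscaleV U : critG U -> critF (tscale (fun l => (sqrt_lam l)^-1) U).
Proof.
move=> /(is_grad_tscale (Mi := Num.sqrt lmax) _ _ _ _ Fobj_tscaleV); rewrite tscale0; apply.
- by move=> l; rewrite invr_eq0 sqrt_lam_neq0.
- by rewrite invr_gt0 lamP_gt0.
- by rewrite sqrtr_gt0 lam_max_gt0.
- by move=> l lL; rewrite invrK sqrt_lam_le.
Qed.

Lemma tdist_crit_Gobj_tscale_le W :
  tdist L (tscale sqrt_lam W) critG <= Num.sqrt lmax * tdist L W critF.
Proof.
apply: tdist_tscale_le sqrt_lam_le crit_Gobj_tscale _.
  by rewrite sqrtr_gt0 lam_max_gt0.
by move=> U /crit_Fobj_tscaleV; exact: ex_intro.
Qed.

Lemma tdist_crit_Fobj_le W :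
  tdist L W critF <= (Num.sqrt lmin)^-1 * tdist L (tscale sqrt_lam W) critG.
Proof.
rewrite -{1}(tscaleK sqrt_lam_neq0 W).
apply: tdist_tscale_le sqrt_lamV_le crit_Fobj_tscaleV _.
  by rewrite invr_gt0 sqrtr_gt0 lam_min_gt0.
by move=> V /crit_Gobj_tscale; exact: ex_intro.
Qed.

Lemma tnorm_grad_Gobj_tscale_le (g : tup R d) :
  tnorm L (tscale (fun l => lP / sqrt_lam l) g) <= lP / Num.sqrt lmin * tnorm L g.
Proof.
apply: tnorm_tscale_le => [|l lL]; first by rewrite divr_ge0 ?sqrtr_ge0 ?ltW ?lamP_gt0.
by rewrite !exprMn ler_wpM2l ?sqr_ge0 ?sqrt_lamV_le.
Qed.

End LayerRescaling.

Theorem lemma3p1 (R : realType) (L : nat) (d : nat -> nat)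
  (Y : 'M[R]_(d L, d 0%N)) (lam : nat -> R) :
  (2 <= L)%N ->
  (forall l, (l <= L)%N -> (0 < d l)%N) ->
  (forall l, (l < L)%N -> 0 < lam l) ->
  forall eps kappa : R, 0 < eps -> 0 < kappa ->
  (forall Z : tup R d,
     tdist L Z (crit L (Gobj Y lam)) <= eps ->
     forall g : tup R d, is_grad L (Gobj Y lam) Z g ->
       tdist L Z (crit L (Gobj Y lam)) <= kappa * tnorm L g) ->
  forall W : tup R d,
    tdist L W (crit L (Fobj Y lam)) <= eps / Num.sqrt (lam_max L lam) ->
    forall g : tup R d, is_grad L (Fobj Y lam) W g ->
      tdist L W (crit L (Fobj Y lam))
        <= kappa * lamP L lam / lam_min L lam * tnorm L g.
Proof.
move=> L_ge2 _ lam_gt0 eps kappa _ kappa_gt0 G_bound W W_near g gradF.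
have L_gt0 : (0 < L)%N by apply: leq_trans L_ge2.
have lmin_gt0 := lam_min_gt0 L_gt0 lam_gt0.
set smin := Num.sqrt (lam_min L lam).
have smin_gt0 : 0 < smin by rewrite sqrtr_gt0.
have sminV_ge0 : 0 <= smin^-1 by rewrite invr_ge0 ltW.
have Z_near : tdist L (tscale (sqrt_lam L lam) W) (crit L (Gobj Y lam)) <= eps.
  apply: le_trans (tdist_crit_Gobj_tscale_le Y L_gt0 lam_gt0 W) _.
  by rewrite mulrC -ler_pdivlMr // sqrtr_gt0 (lam_max_gt0 L_gt0 lam_gt0).
have Z_bound := G_bound _ Z_near _ (is_grad_Gobj_tscale L_gt0 lam_gt0 gradF).
have gradG_le := tnorm_grad_Gobj_tscale_le L_gt0 lam_gt0 g.
apply: le_trans (tdist_crit_Fobj_le Y L_gt0 lam_gt0 W) _.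
apply: le_trans (ler_wpM2l sminV_ge0 Z_bound) _.
apply: le_trans (ler_wpM2l sminV_ge0 (ler_wpM2l (ltW kappa_gt0) gradG_le)) _.
rewrite -/smin -(sqr_sqrtr (ltW lmin_gt0)) -/smin.
by rewrite le_eqVlt; apply/orP; left; apply/eqP; field; rewrite gt_eqF.
Qed.
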